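(* Let $P$ be a prime hyperideal of $R$ and let $I$ be a $P$-primary hyperideal of $R$ such that $(P^2:c)\subseteq I$ for every $c\in P\setminus I$. Then $I$ is a 1-absorbing prime hyperideal of $R$.
   Context: Throughout, $R$ is a commutative multiplicative hyperring ($(R,+)$ abelian group, $\circ$ a commutative associative hyperoperation into nonempty subsets with $a\circ(b+c)\subseteq a\circ b+a\circ c$, $a\circ(-b)=(-a)\circ b=-(a\circ b)$; $A\circ B=\bigcup_{a\in A,b\in B}a\circ b$), with identity $1$ ($a\in a\circ 1$); units are $x$ with $1\in x\circ y$ for some $y$. All hyperideals are $\mathbf{C}$-hyperideals (for any finite product $A=r_1\circ\cdots\circ r_n$, $A\cap I\neq\emptyset\Rightarrow A\subseteq I$). $\sqrt{I}=\{r: r^n\subseteq I\text{ for some }n\}$ (the intersection of prime hyperideals containing $I$). A primary hyperideal is a nonzero proper hyperideal $Q$ with $x\circ y\subseteq Q\Rightarrow x\in Q$ or $y\in\sqrt Q$; it is $P$-primary if $\sqrt Q=P$. $P^2=P\circ P$, and $(J:c)=\{r\in R: r\circ c\subseteq J\}$. A 1-absorbing prime hyperideal is a proper hyperideal $I$ such that for all nonunit $x,y,z$, $x\circ y\circ z\subseteq I$ implies $x\circ y\subseteq I$ or $z\in I$. *)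

From Stdlib Require Import List.
Import ListNotations.
Set Implicit Arguments.
Unset Strict Implicit.

Definition hset (T : Type) := T -> Prop.

Definition hsub (T : Type) (A B : hset T) : Prop := forall x, A x -> B x.
Definition heq (T : Type) (A B : hset T) : Prop := forall x, A x <-> B x.

Record MHyperring := {
  carrier :> Type;
  add : carrier -> carrier -> carrier;
  opp : carrier -> carrier;
  zero : carrier;
  one : carrier;
  hmul : carrier -> carrier -> hset carrier;
  addA : forall a b c, add a (add b c) = add (add a b) c;
  addC : forall a b, add a b = add b a;
  add0 : forall a, add zero a = a;
  addN : forall a, add (opp a) a = zero;
  hmul_nonempty : forall a b, exists z, hmul a b z;
  hmulC : forall a b, heq (hmul a b) (hmul b a);
  (* (a o b) o c = a o (b o c), with A o B the union of the a o b *)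
  hmulA : forall a b c,
    heq (fun z => exists u, hmul a b u /\ hmul u c z)
        (fun z => exists v, hmul b c v /\ hmul a v z);
  hmulDr : forall a b c,
    hsub (hmul a (add b c))
         (fun z => exists u v, hmul a b u /\ hmul a c v /\ z = add u v);
  hmulNr : forall a b, heq (hmul a (opp b)) (fun z => hmul a b (opp z));
  hmulNl : forall a b, heq (hmul (opp a) b) (fun z => hmul a b (opp z));
  hmul1 : forall a, hmul a one a
}.

Section Defs.
Variable R : MHyperring.

Definition setmul (A B : hset R) : hset R :=
  fun z => exists a b, A a /\ B b /\ @hmul R a b z.

Definition single (r : R) : hset R := fun z => z = r.

(* finite product r o s_1 o ... o s_k *)
Fixpoint prodl (r : R) (l : list R) : hset R :=
  match l with
  | [] => single r
  | s :: l' => setmul (single r) (prodl s l')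
  end.

Fixpoint hpow (r : R) (n : nat) : hset R :=
  match n with
  | 0 => single (@one R)
  | 1 => single r
  | S m => setmul (hpow r m) (single r)
  end.

Definition is_unit (x : R) : Prop := exists y, @hmul R x y (@one R).

Definition hyperideal (I : hset R) : Prop :=
  (exists a, I a) /\
  (forall a b, I a -> I b -> I (@add R a (@opp R b))) /\
  (forall r a, I a -> hsub (@hmul R r a) I).

Definition C_condition (I : hset R) : Prop :=
  forall (r : R) (l : list R),
    (exists z, prodl r l z /\ I z) -> hsub (prodl r l) I.

(* standing assumption: all hyperideals are C-hyperideals *)
Definition C_hyperideal (I : hset R) : Prop := hyperideal I /\ C_condition I.

Definition proper (I : hset R) : Prop := exists x, ~ I x.

Definition nonzero (I : hset R) : Prop := exists x, I x /\ x <> @zero R.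

Definition hradical (I : hset R) : hset R :=
  fun r => exists n, 1 <= n /\ hsub (hpow r n) I.

Definition prime_hyperideal (P : hset R) : Prop :=
  C_hyperideal P /\ proper P /\
  forall x y, hsub (@hmul R x y) P -> P x \/ P y.

Definition primary_hyperideal (Q : hset R) : Prop :=
  C_hyperideal Q /\ nonzero Q /\ proper Q /\
  forall x y, hsub (@hmul R x y) Q -> Q x \/ hradical Q y.

Definition P_primary (P Q : hset R) : Prop :=
  primary_hyperideal Q /\ heq (hradical Q) P.

Definition colon (J : hset R) (c : R) : hset R :=
  fun r => hsub (@hmul R r c) J.

Definition one_absorbing_prime (I : hset R) : Prop :=
  C_hyperideal I /\ proper I /\
  forall x y z, ~ is_unit x -> ~ is_unit y -> ~ is_unit z ->
    hsub (setmul (@hmul R x y) (single z)) I ->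
    hsub (@hmul R x y) I \/ I z.

End Defs.

(* Let x o y o z lie in I with z not in I.  For every u in x o y we
   have u o z in I, so primariness of I (with z outside I) puts u in sqrt I = P;
   thus x o y lies in P and, P being prime, x or y lies in P.  Now take u in
   x o y; if u is not in I, primariness applied to u o z puts z in P, so
   z lies in P \ I.  The member a in {x, y} lying in P satisfies
   a o z in P o P, i.e. a in (P o P : z), which is contained in I; hence
   x o y, which contains a as a factor, lies in I. *)

From Stdlib Require Import Classical.

Section PrimaryFacts.

Variable R : MHyperring.
Variables P I : hset R.

Hypothesis I_absorbs : forall r a, I a -> hsub (hmul r a) I.
Hypothesis I_primary : forall x y, hsub (hmul x y) I -> I x \/ hradical I y.
Hypothesis radical_I : heq (hradical I) P.

Lemma primary_factor_in_radical (a b : R) :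
  hsub (hmul a b) I -> ~ I a -> P b.
Proof.
  intros Hab Ha.
  destruct (I_primary a b Hab) as [HIa | Hb]; [contradiction |].
  exact (proj1 (radical_I b) Hb).
Qed.

Lemma absorb_left (a b : R) : I a -> hsub (hmul a b) I.
Proof.
  intros Ha w Hw. apply (I_absorbs b a Ha). exact (proj1 (hmulC a b w) Hw).
Qed.

Section OneAbsorbing.

Hypothesis P_prime : forall x y, hsub (hmul x y) P -> P x \/ P y.
Hypothesis colon_in_I :
  forall c, P c -> ~ I c -> hsub (colon (setmul P P) c) I.

Variables x y z : R.
Hypothesis xyz_in_I : hsub (setmul (hmul x y) (single z)) I.
Hypothesis z_notin_I : ~ I z.

Lemma elem_times_z_in_I (u : R) : hmul x y u -> hsub (hmul u z) I.
Proof.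
  intros Hu w Hw. apply xyz_in_I. exists u, z. repeat split; assumption.
Qed.

(* First half: x o y lies in the radical P, hence x or y lies in P. *)
Lemma factor_in_P : P x \/ P y.
Proof.
  apply P_prime. intros u Hu.
  apply (primary_factor_in_radical z u); [| exact z_notin_I].
  intros w Hw. apply (elem_times_z_in_I u Hu).
  exact (proj1 (hmulC z u w) Hw).
Qed.

(* Second half: as soon as some element of x o y escapes I, z lies in P \ I,
   and a factor a in P of x o y lies in (P o P : z), hence in I. *)
Lemma factor_in_P_absorbed (a : R) :
  P a -> (exists u, hmul x y u /\ ~ I u) -> I a.
Proof.
  intros Pa [u [Hu Hnu]].
  assert (Pz : P z)
    by exact (primary_factor_in_radical u z (elem_times_z_in_I u Hu) Hnu).
  apply (colon_in_I z Pz z_notin_I).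
  intros w Hw. exists a, z. repeat split; assumption.
Qed.

Lemma product_in_I : hsub (hmul x y) I.
Proof.
  intros u Hu.
  destruct (classic (I u)) as [HIu | Hnu]; [exact HIu |].
  assert (Hesc : exists v, hmul x y v /\ ~ I v) by (exists u; auto).
  destruct factor_in_P as [Px | Py].
  - exact (absorb_left x y (factor_in_P_absorbed x Px Hesc) u Hu).
  - exact (I_absorbs x y (factor_in_P_absorbed y Py Hesc) u Hu).
Qed.

End OneAbsorbing.

End PrimaryFacts.

Theorem mainTheorem4 (R : MHyperring) (P I : hset R) :
  prime_hyperideal P ->
  P_primary P I ->
  (forall c : R, P c -> ~ I c -> hsub (colon (setmul P P) c) I) ->
  one_absorbing_prime I.
Proof.
  intros [_ [_ P_prime]] [[IC [_ [I_proper I_primary]]] radical_I] colon_in_I.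
  split; [exact IC |]. split; [exact I_proper |].
  destruct IC as [[_ [_ I_absorbs]] _].
  intros x y z _ _ _ Hxyz.
  destruct (classic (I z)) as [Hz | Hz]; [right; exact Hz | left].
  exact (@product_in_I R P I I_absorbs I_primary radical_I P_prime colon_in_I
           x y z Hxyz Hz).
Qed.
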